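(* Assume $a_{j,j+1}\neq0$ for all $1\le j\le d-1$. Let $2\le i\le d$, let $\omega\subset\mathbb Z^i$ be an orbit of the map $\mathbf l\mapsto\mathbf lA_i^T$ containing some $\mathbf l$ with last coordinate $l_i\ne0$, fix $\mathbf l^{(0)}\in\omega$ and set $\mathbf l^{(k)}=\mathbf l^{(0)}(A_i^T)^k$ for $k\in\mathbb Z$. Let $$\Psi_i^\perp(\mathbf y)=\sum_{\mathbf l\in\omega}c_{\mathbf l}\,e(\mathbf l\cdot\mathbf y),\qquad \mathbf y\in\mathbb T^i,$$ with only finitely many nonzero $c_{\mathbf l}\in\mathbb C$, and let $N\in\mathbb N$ be such that $c_{\mathbf l^{(n)}}=0$ for all $|n|\ge N$. Then $\Psi_i^\perp$ is a smooth coboundary for $T_i$ (i.e. $\Psi_i^\perp=u\circ T_i-u$ for some $C^\infty$ $u:\mathbb T^i\to\mathbb C$) if and only if $$\sum_{k=1}^{N}c_{\mathbf l^{(k)}}\,e\Big(-\sum_{j=0}^{k-1}\mathbf l^{(j)}\cdot\mathbf b_i\Big)+c_{\mathbf l^{(0)}}+\sum_{k=1}^{N-1}c_{\mathbf l^{(-k)}}\,e\Big(\sum_{j=1}^{k}\mathbf l^{(-j)}\cdot\mathbf b_i\Big)=0.$$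
   Context: $e(x)=\exp(2\pi i x)$. Let $d\ge2$, $A=(a_{l,m})$ a $d\times d$ upper triangular unipotent integer matrix, $\mathbf b\in\mathbb T^d$, $T\mathbf x=\mathbf xA+\mathbf b$ on $\mathbb T^d$ uniquely ergodic. For $1\le i\le d$, $A_i=(a_{l,m})_{1\le l,m\le i}$, $\mathbf b_i=(b_1,\dots,b_i)$, and $T_i\mathbf y=\mathbf yA_i+\mathbf b_i$ on $\mathbb T^i$ (row vectors); $A_i^T$ is the transpose of $A_i$. Note the last coordinate $l_i$ is constant along each orbit $\omega$. *)

From Stdlib Require Import Reals ZArith Lia.
Open Scope R_scope.

(** Vectors in R^n / Z^n are represented as functions [nat -> R] / [nat -> Z];
    only the coordinates [0 .. n-1] are meaningful (0-based indexing:
    paper's coordinate j corresponds to index j-1). *)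

Fixpoint rsum (n : nat) (f : nat -> R) : R :=
  match n with O => 0 | S n' => rsum n' f + f n' end.
Fixpoint zsum (n : nat) (f : nat -> Z) : Z :=
  match n with O => 0%Z | S n' => (zsum n' f + f n')%Z end.

Definition Cplx : Type := (R * R)%type.
Definition C0 : Cplx := (0, 0).
Definition Cadd (z w : Cplx) : Cplx := (fst z + fst w, snd z + snd w).
Definition Csub (z w : Cplx) : Cplx := (fst z - fst w, snd z - snd w).
Definition Cmul (z w : Cplx) : Cplx :=
  (fst z * fst w - snd z * snd w, fst z * snd w + snd z * fst w).
Fixpoint Csum (n : nat) (f : nat -> Cplx) : Cplx :=
  match n with O => C0 | S n' => Cadd (Csum n' f) (f n') end.
Definition e (x : R) : Cplx := (cos (2 * PI * x), sin (2 * PI * x)).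

Definition dot (n : nat) (l : nat -> Z) (y : nat -> R) : R :=
  rsum n (fun m => IZR (l m) * y m).

(** The affine map x |-> x A_n + b_n (row vectors) on R^n, lifting T_n;
    coordinates >= n are left untouched. *)
Definition Tmap (n : nat) (A : nat -> nat -> Z) (b : nat -> R)
  (x : nat -> R) : nat -> R :=
  fun m => if Nat.ltb m n then rsum n (fun l => x l * IZR (A l m)) + b m
           else x m.

Definition upd (y : nat -> R) (j : nat) (t : R) : nat -> R :=
  fun m => if Nat.eqb m j then t else y m.

Definition cont (n : nat) (f : (nat -> R) -> R) : Prop :=
  forall x eps, 0 < eps -> exists delta, 0 < delta /\
    forall y, (forall m, (m < n)%nat -> Rabs (y m - x m) < delta) ->
      Rabs (f y - f x) < eps.

Fixpoint Ck (n : nat) (k : nat) (f : (nat -> R) -> R) : Prop :=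
  match k with
  | O => cont n f
  | S k' => cont n f /\
      forall j, (j < n)%nat -> exists g : (nat -> R) -> R,
        (forall y, derivable_pt_lim (fun t => f (upd y j t)) (y j) (g y)) /\
        Ck n k' g
  end.

Definition smooth (n : nat) (f : (nat -> R) -> R) : Prop :=
  forall k, Ck n k f.

(** A function on the torus T^n = R^n / Z^n: depends only on the first n
    coordinates and is 1-periodic in each of them. *)
Definition torus_fun {X : Type} (n : nat) (u : (nat -> R) -> X) : Prop :=
  (forall y y', (forall m, (m < n)%nat -> y m = y' m) -> u y = u y') /\
  (forall y j, (j < n)%nat -> u (upd y j (y j + 1)) = u y).

(** Unique ergodicity of T on T^n, via Oxtoby's characterization
    (for continuous maps of compact metric spaces): for every continuous
    real function f on T^n, the Birkhoff averages converge uniformly to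
    a constant. *)
Definition uniquely_ergodic (n : nat) (A : nat -> nat -> Z) (b : nat -> R)
  : Prop :=
  forall f : (nat -> R) -> R, torus_fun n f -> cont n f ->
    exists c : R, forall eps, 0 < eps -> exists N : nat,
      forall k : nat, (N <= k)%nat -> (0 < k)%nat -> forall x,
        Rabs (rsum k (fun j => f (Nat.iter j (Tmap n A b) x)) / INR k - c)
          < eps.

Definition smooth_coboundary (n : nat) (A : nat -> nat -> Z) (b : nat -> R)
  (Psi : (nat -> R) -> Cplx) : Prop :=
  exists u : (nat -> R) -> Cplx,
    torus_fun n u /\ smooth n (fun y => fst (u y)) /\
    smooth n (fun y => snd (u y)) /\
    forall y, Psi y = Csub (u (Tmap n A b y)) (u y).

From Coquelicot Require Import Coquelicot.
From Stdlib Require Import Reals ZArith Lra Lia ClassicalEpsilon.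
Open Scope R_scope.

(** Write [L k] for the orbit point [l^(k)] and [beta k = L k . b], so that
    [L k . T y = L (k+1) . y + beta k].  If [Psi = u o T - u] with [u] continuous, the
    averages [D k] of [u(y) e(- L k . y)] along [T]-orbits exist by unique ergodicity and,
    since the averages of [e((L j - L k) . y)] are Kronecker deltas, satisfy
    [D k e(beta k) = c (k+1) + D (k+1)].  Twisting by the accumulated phase turns this into
    a telescoping relation for [E k = D k e(phase k)], which reduces the obstruction to
    [E (-N) - E N]; [E] is constant outside [(-N, N)] while Bessel's inequality makes
    [|D k|^2] summable, so both terms vanish.  The deltas come from the last two
    coordinates: [L k] is constant in coordinate [i] and affine with nonzero slope in
    coordinate [i-1], and translating coordinate [i-1] commutes with [T] on the first
    [i-1] coordinates, so each nontrivial average equals its own negative.  Conversely, if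
    the obstruction vanishes, the same recursion has a finitely supported solution [D],
    which gives a trigonometric polynomial [u]. *)

(** * Finite sums and complex arithmetic *)

Lemma rsum_S n f : rsum (S n) f = rsum n f + f n.
Proof. reflexivity. Qed.

Lemma rsum_ext n f g :
  (forall m, (m < n)%nat -> f m = g m) -> rsum n f = rsum n g.
Proof.
  induction n as [|n IH]; intros E; simpl; auto.
  rewrite IH by (intros; apply E; lia). rewrite E by lia. reflexivity.
Qed.

Lemma rsum_plus n f g : rsum n (fun m => f m + g m) = rsum n f + rsum n g.
Proof. induction n; simpl; [ring | rewrite IHn; ring]. Qed.

Lemma rsum_scal n a f : rsum n (fun m => a * f m) = a * rsum n f.
Proof. induction n; simpl; [ring | rewrite IHn; ring]. Qed.

Lemma rsum_const n a : rsum n (fun _ => a) = INR n * a.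
Proof. induction n; simpl rsum; [simpl; ring | rewrite IHn, S_INR; ring]. Qed.

Lemma rsum_swap n p f :
  rsum n (fun a => rsum p (fun b => f a b)) = rsum p (fun b => rsum n (fun a => f a b)).
Proof.
  induction n; simpl.
  - rewrite rsum_const; simpl; ring.
  - rewrite IHn, <- rsum_plus. reflexivity.
Qed.

Lemma rsum_split n p f : (n <= p)%nat ->
  rsum p f = rsum n f + rsum (p - n) (fun j => f (n + j)%nat).
Proof.
  intros Hnp. replace p with (n + (p - n))%nat at 1 by lia.
  generalize (p - n)%nat as q. induction q; simpl.
  - rewrite Nat.add_0_r; ring.
  - rewrite Nat.add_succ_r; simpl; rewrite IHq; ring.
Qed.

Lemma rsum_nonneg n f : (forall m, (m < n)%nat -> 0 <= f m) -> 0 <= rsum n f.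
Proof.
  induction n; simpl; intros H; [lra|].
  assert (0 <= f n) by (apply H; lia).
  assert (0 <= rsum n f) by (apply IHn; intros; apply H; lia). lra.
Qed.

Lemma nonneg_archimedean_zero a Q : 0 <= a -> (forall M, INR M * a <= Q) -> a = 0.
Proof.
  intros [Ha|Ha] H; [|auto].
  destruct (INR_archimed a Q Ha) as [M HM]. specialize (H M). lra.
Qed.

Lemma rsum_upd n F G j : (j < n)%nat ->
  rsum n (fun m => if Nat.eqb m j then F m else G m) = rsum n G + (F j - G j).
Proof.
  induction n; intros Hj; [lia|]. simpl.
  destruct (Nat.eq_dec j n) as [->|Hne].
  - rewrite Nat.eqb_refl, (rsum_ext n _ G); [ring|].
    intros m Hm. destruct (Nat.eqb_spec m n); [lia|auto].
  - rewrite IHn by lia. destruct (Nat.eqb_spec n j); [lia|ring].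
Qed.

Lemma IZR_zsum n f : IZR (zsum n f) = rsum n (fun m => IZR (f m)).
Proof. induction n; simpl; auto. rewrite plus_IZR, IHn; auto. Qed.

Lemma zsum_S n f : zsum (S n) f = (zsum n f + f n)%Z.
Proof. reflexivity. Qed.

Lemma zsum_zero n f : (forall m, (m < n)%nat -> f m = 0%Z) -> zsum n f = 0%Z.
Proof.
  induction n; simpl; intros H; auto.
  rewrite IHn by (intros; apply H; lia). rewrite H by lia. reflexivity.
Qed.

Lemma dot_ext n l l' y y' :
  (forall m, (m < n)%nat -> IZR (l m) * y m = IZR (l' m) * y' m) ->
  dot n l y = dot n l' y'.
Proof. apply rsum_ext. Qed.

Lemma dot_upd n l y j t : (j < n)%nat ->
  dot n l (upd y j t) = dot n l y + IZR (l j) * (t - y j).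
Proof.
  intros Hj. unfold dot.
  rewrite (rsum_ext n _ (fun m => if Nat.eqb m j then IZR (l m) * t
                                  else IZR (l m) * y m)).
  - rewrite rsum_upd by auto. ring.
  - intros m _. unfold upd. destruct (Nat.eqb m j); auto.
Qed.

Lemma dot_sub n l l' y :
  dot n l y - dot n l' y = dot n (fun m => (l m - l' m)%Z) y.
Proof. unfold dot. induction n; simpl; [ring|]. rewrite <- IHn, minus_IZR. ring. Qed.

Lemma dot_opp n l y : - dot n l y = dot n (fun m => (- l m)%Z) y.
Proof. unfold dot. induction n; simpl; [ring|]. rewrite <- IHn, opp_IZR. ring. Qed.

Definition Cconj (z : Cplx) : Cplx := (fst z, - snd z).
Definition Copp (z : Cplx) : Cplx := (- fst z, - snd z).
Definition C1 : Cplx := (1, 0).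
Definition Cnorm2 (z : Cplx) : R := fst z * fst z + snd z * snd z.

Ltac cring :=
  unfold Cadd, Csub, Cmul, Cconj, Copp, C0, C1, Cnorm2;
  try apply injective_projections; cbn [fst snd]; ring.

Lemma Cnorm2_nonneg z : 0 <= Cnorm2 z.
Proof. unfold Cnorm2. nra. Qed.

Lemma Cnorm2_Cmul z w : Cnorm2 (Cmul z w) = Cnorm2 z * Cnorm2 w.
Proof. cring. Qed.

Lemma Cnorm2_eq0 z : Cnorm2 z = 0 -> z = C0.
Proof.
  destruct z as [x y]; unfold Cnorm2, C0; simpl; intros H.
  f_equal; nra.
Qed.

Lemma e_add a a' : e (a + a') = Cmul (e a) (e a').
Proof.
  unfold e, Cmul; simpl. rewrite Rmult_plus_distr_l, cos_plus, sin_plus.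
  f_equal; ring.
Qed.

Lemma e_0 : e 0 = C1.
Proof. unfold e, C1. rewrite Rmult_0_r, cos_0, sin_0. reflexivity. Qed.

Lemma e_opp a : e (- a) = Cconj (e a).
Proof.
  unfold e, Cconj; simpl. replace (2 * PI * - a) with (- (2 * PI * a)) by ring.
  rewrite cos_neg, sin_neg. reflexivity.
Qed.

Lemma e_plus_IZR a z : e (a + IZR z) = e a.
Proof.
  assert (Hnat : forall a k, e (a + INR k) = e a).
  { intros a' k. unfold e.
    replace (2 * PI * (a' + INR k)) with (2 * PI * a' + 2 * INR k * PI) by ring.
    rewrite cos_period, sin_period. reflexivity. }
  destruct z as [|q|q]; simpl.
  - rewrite Rplus_0_r; reflexivity.
  - change (IZR (Zpos q)) with (IPR q). rewrite <- INR_IPR. apply Hnat.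
  - change (IZR (Zneg q)) with (- IPR q).
    rewrite <- (Hnat (a + - IPR q) (Pos.to_nat q)), INR_IPR. f_equal. ring.
Qed.

Lemma e_plus_half a : e (a + / 2) = Copp (e a).
Proof.
  unfold e, Copp; simpl. replace (2 * PI * (a + / 2)) with (2 * PI * a + PI) by field.
  rewrite neg_cos, neg_sin. reflexivity.
Qed.

Lemma Cnorm2_e a : Cnorm2 (e a) = 1.
Proof. unfold Cnorm2, e; simpl. rewrite <- (sin2_cos2 (2 * PI * a)). unfold Rsqr. ring. Qed.

Lemma Cmul_e_opp a : Cmul (e a) (e (- a)) = C1.
Proof. rewrite <- e_add, Rplus_opp_r. apply e_0. Qed.

Lemma Cmul_e_cancel z z' a : Cmul z (e a) = Cmul z' (e a) -> z = z'.
Proof.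
  intros H.
  assert (Hw : forall w, w = Cmul (Cmul w (e a)) (e (- a))).
  { intros w. transitivity (Cmul w (Cmul (e a) (e (- a)))); [|cring].
    rewrite Cmul_e_opp. cring. }
  rewrite (Hw z), (Hw z'), H. reflexivity.
Qed.

Lemma Csum_S n f : Csum (S n) f = Cadd (Csum n f) (f n).
Proof. reflexivity. Qed.

Lemma Csum_ext n f g :
  (forall m, (m < n)%nat -> f m = g m) -> Csum n f = Csum n g.
Proof.
  induction n; simpl; intros H; auto.
  rewrite IHn by (intros; apply H; lia). rewrite H by lia. reflexivity.
Qed.

Lemma fst_Csum n f : fst (Csum n f) = rsum n (fun m => fst (f m)).
Proof. induction n; simpl; auto. rewrite IHn; auto. Qed.

Lemma Cmul_Csum_l z n f : Cmul z (Csum n f) = Csum n (fun m => Cmul z (f m)).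
Proof. induction n; simpl; [cring | rewrite <- IHn; cring]. Qed.

Lemma Cmul_Csum_r z n f : Cmul (Csum n f) z = Csum n (fun m => Cmul (f m) z).
Proof. induction n; simpl; [cring | rewrite <- IHn; cring]. Qed.

Lemma Cconj_Csum n f : Cconj (Csum n f) = Csum n (fun m => Cconj (f m)).
Proof. induction n; simpl; [cring | rewrite <- IHn; cring]. Qed.

Lemma Csub_Csum n f g :
  Csub (Csum n f) (Csum n g) = Csum n (fun m => Csub (f m) (g m)).
Proof. induction n; simpl; [cring | rewrite <- IHn; cring]. Qed.

Lemma Csum_shift n f : Csum (S n) f = Cadd (f 0%nat) (Csum n (fun m => f (S m))).
Proof.
  induction n; [cbn; cring|].
  rewrite Csum_S, IHn, Csum_S. cring.
Qed.

Lemma Csum_delta n m0 z :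
  Csum n (fun m => if Nat.eqb m m0 then z else C0) = if Nat.ltb m0 n then z else C0.
Proof.
  induction n; simpl; [destruct (Nat.ltb_spec m0 0); [lia|auto]|].
  rewrite IHn.
  destruct (Nat.eqb_spec n m0), (Nat.ltb_spec m0 n), (Nat.ltb_spec m0 (S n));
    subst; try lia; cring.
Qed.

Lemma Csum_Csum_delta_inj n (phi : nat -> Z) (F : nat -> nat -> Cplx) :
  (forall r r', (r < n)%nat -> (r' < n)%nat -> phi r = phi r' -> r = r') ->
  Csum n (fun r => Csum n (fun r' =>
     Cmul (F r r') (if Z.eqb (phi r) (phi r') then C1 else C0))) =
  Csum n (fun r => F r r).
Proof.
  intros Hphi. apply Csum_ext. intros r Hr.
  rewrite (Csum_ext _ _ (fun r' => if Nat.eqb r' r then F r r else C0)).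
  - rewrite Csum_delta. destruct (Nat.ltb_spec r n); [auto|lia].
  - intros r' Hr'.
    destruct (Z.eqb_spec (phi r) (phi r')) as [E|E], (Nat.eqb_spec r' r);
      subst; try cring.
    + specialize (Hphi r r' Hr Hr' E). lia.
    + tauto.
Qed.

Definition Csum_window (N : nat) (f : Z -> Cplx) : Cplx :=
  Csum (2 * N + 1) (fun n => f (Z.of_nat n - Z.of_nat N)%Z).

Lemma Csum_window_ext N f g :
  (forall k, (Z.abs k <= Z.of_nat N)%Z -> f k = g k) ->
  Csum_window N f = Csum_window N g.
Proof. intros H. apply Csum_ext. intros m Hm. apply H. lia. Qed.

Lemma Csum_window_shift N f : f (- Z.of_nat N - 1)%Z = C0 -> f (Z.of_nat N) = C0 ->
  Csum_window N (fun k => f (k - 1)%Z) = Csum_window N f.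
Proof.
  intros Hlo Hhi. unfold Csum_window.
  replace (2 * N + 1)%nat with (S (2 * N)) by lia.
  rewrite Csum_shift, Csum_S.
  replace (Z.of_nat 0 - Z.of_nat N - 1)%Z with (- Z.of_nat N - 1)%Z by lia.
  replace (Z.of_nat (2 * N) - Z.of_nat N)%Z with (Z.of_nat N) by lia.
  rewrite Hlo, Hhi.
  rewrite (Csum_ext _ (fun m => f (Z.of_nat (S m) - Z.of_nat N - 1)%Z)
                      (fun m => f (Z.of_nat m - Z.of_nat N)%Z)) by (intros; f_equal; lia).
  cring.
Qed.

Lemma Csum_window_delta N c K :
  (forall k, (Z.of_nat N <= Z.abs k)%Z -> c k = C0) ->
  Csum_window N (fun k => Cmul (c k) (if Z.eqb k K then C1 else C0)) = c K.
Proof.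
  intros Hc. unfold Csum_window.
  destruct (Z_le_gt_dec (Z.of_nat N) (Z.abs K)) as [HK|HK].
  - rewrite (Hc K HK), (Csum_ext _ _ (fun _ => C0)).
    + induction (2 * N + 1)%nat as [|n IH]; [reflexivity|]. rewrite Csum_S, IH. cring.
    + intros m _. destruct (Z.eqb_spec (Z.of_nat m - Z.of_nat N) K) as [<-|]; [|cring].
      rewrite (Hc _ HK). cring.
  - rewrite (Csum_ext _ _ (fun m => if Nat.eqb m (Z.to_nat (K + Z.of_nat N)) then c K else C0)).
    + rewrite Csum_delta.
      destruct (Nat.ltb_spec (Z.to_nat (K + Z.of_nat N)) (2 * N + 1)); [auto|lia].
    + intros m Hm.
      destruct (Nat.eqb_spec m (Z.to_nat (K + Z.of_nat N))),
               (Z.eqb_spec (Z.of_nat m - Z.of_nat N) K);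
        try lia; [subst K; cring | cring].
Qed.

(** * Continuity, smoothness and periodicity *)

Lemma cont_comp2 n (h : R -> R -> R) f g :
  (forall a a', continuity_2d_pt h a a') -> cont n f -> cont n g ->
  cont n (fun y => h (f y) (g y)).
Proof.
  intros Hh Hf Hg x eps Heps.
  destruct (Hh (f x) (g x) (mkposreal eps Heps)) as [dl Hdl].
  destruct (Hf x dl (cond_pos dl)) as [d1 [Hd1 H1]].
  destruct (Hg x dl (cond_pos dl)) as [d2 [Hd2 H2]].
  exists (Rmin d1 d2); split; [apply Rmin_pos; auto|].
  intros y Hy. apply Hdl; [apply H1 | apply H2]; intros m Hm;
    (eapply Rlt_le_trans; [apply Hy, Hm | first [apply Rmin_l | apply Rmin_r]]).
Qed.

Lemma cont_plus n f g : cont n f -> cont n g -> cont n (fun y => f y + g y).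
Proof.
  apply (cont_comp2 n Rplus). intros a a'.
  apply continuity_2d_pt_plus; [apply continuity_2d_pt_id1 | apply continuity_2d_pt_id2].
Qed.

Lemma cont_mult n f g : cont n f -> cont n g -> cont n (fun y => f y * g y).
Proof.
  apply (cont_comp2 n Rmult). intros a a'.
  apply continuity_2d_pt_mult; [apply continuity_2d_pt_id1 | apply continuity_2d_pt_id2].
Qed.

Lemma cont_comp n (h : R -> R) f : continuity h -> cont n f -> cont n (fun y => h (f y)).
Proof.
  intros Hh Hf. apply (cont_comp2 n (fun a _ => h a) f f); auto. intros a a'.
  apply (continuity_1d_2d_pt_comp h (fun a _ => a)); [apply Hh | apply continuity_2d_pt_id1].
Qed.

Lemma cont_const n a : cont n (fun _ => a).
Proof. intros x eps Heps. exists 1; split; [lra|]. intros. rewrite Rminus_diag, Rabs_R0; lra. Qed.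

Lemma cont_coord n m : (m < n)%nat -> cont n (fun y => y m).
Proof. intros Hm x eps Heps. exists eps; split; auto. Qed.

Lemma cont_ext n f g : (forall y, f y = g y) -> cont n f -> cont n g.
Proof.
  intros E H x eps Heps. destruct (H x eps Heps) as [dl [Hdl Hy]].
  exists dl; split; auto. intros y Hm. rewrite <- !E. auto.
Qed.

Lemma cont_mono n n' f : (n <= n')%nat -> cont n f -> cont n' f.
Proof.
  intros Hn H x eps Heps. destruct (H x eps Heps) as [dl [Hdl Hy]].
  exists dl; split; auto. intros y Hm. apply Hy. intros; apply Hm; lia.
Qed.

Lemma cont_rsum n k (F : nat -> (nat -> R) -> R) :
  (forall m, (m < k)%nat -> cont n (F m)) -> cont n (fun y => rsum k (fun m => F m y)).
Proof.
  induction k as [|k IH]; intros H; [apply (cont_const n 0)|].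
  apply cont_plus; [apply IH; intros; apply H|apply H]; lia.
Qed.

Lemma cont_dot n l : cont n (dot n l).
Proof.
  apply cont_rsum. intros m Hm.
  apply cont_mult; [apply cont_const | apply cont_coord, Hm].
Qed.

Definition contC n (g : (nat -> R) -> Cplx) : Prop :=
  cont n (fun y => fst (g y)) /\ cont n (fun y => snd (g y)).

Lemma contC_ext n f g : (forall y, f y = g y) -> contC n f -> contC n g.
Proof.
  intros E [H1 H2]; split; [eapply cont_ext; [|exact H1] | eapply cont_ext; [|exact H2]];
    intros; cbv beta; rewrite E; reflexivity.
Qed.

Lemma contC_const n z : contC n (fun _ => z).
Proof. split; apply cont_const. Qed.

Lemma contC_Cadd n f g : contC n f -> contC n g -> contC n (fun y => Cadd (f y) (g y)).
Proof. intros [] []; split; apply cont_plus; auto. Qed.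

Lemma contC_Cmul n f g : contC n f -> contC n g -> contC n (fun y => Cmul (f y) (g y)).
Proof.
  intros [Hf1 Hf2] [Hg1 Hg2]; split; cbn [Cmul fst snd].
  - apply cont_plus; [|apply (cont_ext n (fun y => -1 * (snd (f y) * snd (g y))));
      [intros; ring | apply cont_mult; [apply cont_const|]]]; apply cont_mult; auto.
  - apply cont_plus; apply cont_mult; auto.
Qed.

Lemma contC_e_dot n l : contC n (fun y => e (dot n l y)).
Proof.
  split; apply cont_comp; [exact continuity_cos | | exact continuity_sin | ];
    apply cont_mult; try apply cont_const; apply cont_dot.
Qed.

Lemma contC_Csum n K (F : nat -> (nat -> R) -> Cplx) :
  (forall m, (m < K)%nat -> contC n (F m)) -> contC n (fun y => Csum K (fun m => F m y)).
Proof.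
  induction K as [|K IH]; intros H; [apply (contC_const n C0)|].
  apply contC_Cadd; [apply IH; intros; apply H|apply H]; lia.
Qed.

Lemma contC_mono n n' g : (n <= n')%nat -> contC n g -> contC n' g.
Proof. intros Hn []; split; eapply cont_mono; eauto. Qed.

Definition trig_poly n K (D : nat -> Cplx) (l : nat -> nat -> Z) (y : nat -> R) : Cplx :=
  Csum K (fun m => Cmul (D m) (e (dot n (l m) y))).

Lemma contC_trig_poly n K D l : contC n (trig_poly n K D l).
Proof.
  apply contC_Csum. intros m _. apply contC_Cmul; [apply contC_const | apply contC_e_dot].
Qed.

Lemma derivable_Cmul_e_dot n z l y j : (j < n)%nat ->
  let z' := Cmul z (0, 2 * PI * IZR (l j)) in
  derivable_pt_lim (fun t => fst (Cmul z (e (dot n l (upd y j t))))) (y j)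
    (fst (Cmul z' (e (dot n l y)))) /\
  derivable_pt_lim (fun t => snd (Cmul z (e (dot n l (upd y j t))))) (y j)
    (snd (Cmul z' (e (dot n l y)))).
Proof.
  intros Hj z'. unfold z'.
  set (a := dot n l y). set (s := IZR (l j)).
  assert (E : forall t, e (dot n l (upd y j t)) = e (a + s * (t - y j)))
    by (intros; rewrite dot_upd by exact Hj; reflexivity).
  split; eapply derivable_pt_lim_ext; try (intros t; rewrite E; reflexivity);
    apply is_derive_Reals; unfold e, Cmul; cbn [fst snd]; auto_derive; auto;
    replace (a + s * (y j + - y j)) with a by ring; ring.
Qed.

Lemma derivable_trig_poly n K D l y j : (j < n)%nat ->
  let D' := fun m => Cmul (D m) (0, 2 * PI * IZR (l m j)) in
  derivable_pt_lim (fun t => fst (trig_poly n K D l (upd y j t))) (y j)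
    (fst (trig_poly n K D' l y)) /\
  derivable_pt_lim (fun t => snd (trig_poly n K D l (upd y j t))) (y j)
    (snd (trig_poly n K D' l y)).
Proof.
  intros Hj D'. unfold trig_poly.
  induction K as [|K [IH1 IH2]]; [split; apply derivable_pt_lim_const|].
  destruct (derivable_Cmul_e_dot n (D K) (l K) y j Hj) as [H1 H2].
  split; apply derivable_pt_lim_plus; auto.
Qed.

Lemma trig_poly_smooth n K l D :
  smooth n (fun y => fst (trig_poly n K D l y)) /\
  smooth n (fun y => snd (trig_poly n K D l y)).
Proof.
  enough (H : forall k D, Ck n k (fun y => fst (trig_poly n K D l y)) /\
                          Ck n k (fun y => snd (trig_poly n K D l y)))
    by (split; intros k; apply H).
  induction k as [|k IH]; intros D0; [apply contC_trig_poly|].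
  destruct (contC_trig_poly n K D0 l) as [Hc1 Hc2].
  set (D' := fun j m => Cmul (D0 m) (0, 2 * PI * IZR (l m j))).
  split; (split; [assumption|]); intros j Hj.
  - exists (fun y => fst (trig_poly n K (D' j) l y)).
    split; [intros y; apply (derivable_trig_poly n K D0 l y j Hj) | apply IH].
  - exists (fun y => snd (trig_poly n K (D' j) l y)).
    split; [intros y; apply (derivable_trig_poly n K D0 l y j Hj) | apply IH].
Qed.

Lemma torus_mono {X : Type} n n' (f : (nat -> R) -> X) :
  (n <= n')%nat -> torus_fun n f -> torus_fun n' f.
Proof.
  intros Hn [Hdep Hper]. split.
  - intros y y' H; apply Hdep; intros; apply H; lia.
  - intros y j Hj. destruct (Nat.lt_ge_cases j n); [apply Hper; auto|].
    apply Hdep. intros m Hm. unfold upd. destruct (Nat.eqb_spec m j); [lia|auto].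
Qed.

Lemma torus_map {X Y : Type} n (f : (nat -> R) -> X) (h : X -> Y) :
  torus_fun n f -> torus_fun n (fun y => h (f y)).
Proof. intros [Hdep Hper]; split; intros; [rewrite (Hdep y y') | rewrite Hper]; auto. Qed.

Lemma torus_map2 {X Y W : Type} n (f : (nat -> R) -> X) (g : (nat -> R) -> Y)
  (h : X -> Y -> W) :
  torus_fun n f -> torus_fun n g -> torus_fun n (fun y => h (f y) (g y)).
Proof.
  intros [Hf1 Hf2] [Hg1 Hg2]; split; intros;
    [rewrite (Hf1 y y'), (Hg1 y y') | rewrite Hf2, Hg2]; auto.
Qed.

Lemma torus_ext {X : Type} n (f g : (nat -> R) -> X) :
  (forall y, f y = g y) -> torus_fun n f -> torus_fun n g.
Proof. intros E [Hdep Hper]; split; intros; rewrite <- !E; auto. Qed.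

Lemma torus_e_dot n l : torus_fun n (fun y => e (dot n l y)).
Proof.
  split.
  - intros y y' H. f_equal. apply dot_ext. intros m Hm. rewrite H; auto.
  - intros y j Hj. rewrite dot_upd by exact Hj.
    replace (y j + 1 - y j) with 1 by ring. rewrite Rmult_1_r. apply e_plus_IZR.
Qed.

Lemma torus_trig_poly n K D l : torus_fun n (trig_poly n K D l).
Proof.
  unfold trig_poly. induction K as [|K IH].
  - split; reflexivity.
  - apply (torus_map2 n _ _ Cadd IH).
    apply (torus_map n _ (Cmul (D K))), torus_e_dot.
Qed.

Section Uniform_averages.

Context {X : Type} (T : X -> X).

Definition avg_lim (f : X -> R) (c : R) : Prop :=
  forall eps, 0 < eps -> exists N : nat,
    forall k : nat, (N <= k)%nat -> (0 < k)%nat -> forall x,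
      Rabs (rsum k (fun j => f (Nat.iter j T x)) / INR k - c) < eps.

Lemma avg_lim_ext f g c : (forall x, f x = g x) -> avg_lim f c -> avg_lim g c.
Proof.
  intros E H eps Heps. destruct (H eps Heps) as [N HN]. exists N. intros k Hk Hk0 x.
  rewrite (rsum_ext k _ (fun j => f (Nat.iter j T x))) by (intros; rewrite E; auto). auto.
Qed.

Lemma avg_lim_transfer f g c :
  (forall x, exists x', forall j, g (Nat.iter j T x) = f (Nat.iter j T x')) ->
  avg_lim f c -> avg_lim g c.
Proof.
  intros E H eps Heps. destruct (H eps Heps) as [N HN]. exists N. intros k Hk Hk0 x.
  destruct (E x) as [x' Hx']. rewrite (rsum_ext k _ (fun j => f (Nat.iter j T x'))); auto.
Qed.

Lemma avg_lim_const c : avg_lim (fun _ => c) c.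
Proof.
  intros eps Heps. exists 0%nat. intros k _ Hk x. rewrite rsum_const.
  assert (0 < INR k) by (apply lt_0_INR; lia).
  replace (INR k * c / INR k - c) with 0 by (field; lra). rewrite Rabs_R0; lra.
Qed.

Lemma avg_lim_plus f g a c :
  avg_lim f a -> avg_lim g c -> avg_lim (fun x => f x + g x) (a + c).
Proof.
  intros Hf Hg eps Heps.
  destruct (Hf (eps / 2)) as [N1 HN1]; [lra|]. destruct (Hg (eps / 2)) as [N2 HN2]; [lra|].
  exists (N1 + N2)%nat. intros k Hk Hk0 x. rewrite rsum_plus.
  specialize (HN1 k ltac:(lia) Hk0 x). specialize (HN2 k ltac:(lia) Hk0 x).
  assert (0 < INR k) by (apply lt_0_INR; lia).
  set (sf := rsum k (fun j => f (Nat.iter j T x))) in *.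
  set (sg := rsum k (fun j => g (Nat.iter j T x))) in *.
  replace ((sf + sg) / INR k - (a + c)) with ((sf / INR k - a) + (sg / INR k - c))
    by (field; lra).
  eapply Rle_lt_trans; [apply Rabs_triang | lra].
Qed.

Lemma avg_lim_scal r f a : avg_lim f a -> avg_lim (fun x => r * f x) (r * a).
Proof.
  intros Hf eps Heps.
  assert (Hr : 0 < Rabs r + 1) by (pose proof (Rabs_pos r); lra).
  destruct (Hf (eps / (Rabs r + 1))) as [N HN]; [apply Rdiv_lt_0_compat; lra|].
  exists N. intros k Hk Hk0 x. rewrite rsum_scal. specialize (HN k Hk Hk0 x).
  assert (0 < INR k) by (apply lt_0_INR; lia).
  set (s := rsum k _) in *.
  replace (r * s / INR k - r * a) with (r * (s / INR k - a)) by (field; lra).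
  rewrite Rabs_mult. apply (Rmult_lt_compat_r (Rabs r + 1)) in HN; [|lra].
  replace (eps / (Rabs r + 1) * (Rabs r + 1)) with eps in HN by (field; lra).
  apply Rle_lt_trans with ((Rabs r + 1) * Rabs (s / INR k - a)); [|lra].
  apply Rmult_le_compat_r; [apply Rabs_pos | lra].
Qed.

Variable x0 : X.

Lemma avg_lim_unique f c c' : avg_lim f c -> avg_lim f c' -> c = c'.
Proof.
  intros H H'. destruct (Req_dec c c') as [|Hne]; auto.
  assert (Hp : 0 < Rabs (c - c') / 2)
    by (apply Rdiv_lt_0_compat; [apply Rabs_pos_lt; lra | lra]).
  destruct (H _ Hp) as [N HN]. destruct (H' _ Hp) as [N' HN'].
  specialize (HN (S (N + N')) ltac:(lia) ltac:(lia) x0).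
  specialize (HN' (S (N + N')) ltac:(lia) ltac:(lia) x0).
  set (s := rsum _ _ / _) in *. revert HN HN'. split_Rabs; lra.
Qed.

Lemma avg_lim_nonneg f c : (forall x, 0 <= f x) -> avg_lim f c -> 0 <= c.
Proof.
  intros Hf H. apply Rnot_lt_le. intros Hc.
  destruct (H (- c)) as [N HN]; [lra|].
  specialize (HN (S N) ltac:(lia) ltac:(lia) x0).
  assert (0 <= rsum (S N) (fun j => f (Nat.iter j T x0)) / INR (S N)).
  { apply Rdiv_le_0_compat; [apply rsum_nonneg; auto | apply lt_0_INR; lia]. }
  set (s := rsum _ _ / _) in *. revert HN. split_Rabs; lra.
Qed.

Definition avg_limC (g : X -> Cplx) (z : Cplx) : Prop :=
  avg_lim (fun x => fst (g x)) (fst z) /\ avg_lim (fun x => snd (g x)) (snd z).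

Lemma avg_limC_ext f g z : (forall x, f x = g x) -> avg_limC f z -> avg_limC g z.
Proof. intros E [H1 H2]; split; eapply avg_lim_ext; eauto; intros; simpl; rewrite E; auto. Qed.

Lemma avg_limC_transfer f g z :
  (forall x, exists x', forall j, g (Nat.iter j T x) = f (Nat.iter j T x')) ->
  avg_limC f z -> avg_limC g z.
Proof.
  intros E [H1 H2]; split; eapply avg_lim_transfer; eauto;
    intros x; destruct (E x) as [x' Hx']; exists x'; intros j; rewrite Hx'; auto.
Qed.

Lemma avg_limC_comp_T g z : avg_limC g z -> avg_limC (fun x => g (T x)) z.
Proof.
  apply avg_limC_transfer. intros x. exists (T x). intros j. rewrite Nat.iter_swap. auto.
Qed.

Lemma avg_limC_const z : avg_limC (fun _ => z) z.
Proof. split; apply avg_lim_const. Qed.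

Lemma avg_limC_Cadd f g z w :
  avg_limC f z -> avg_limC g w -> avg_limC (fun x => Cadd (f x) (g x)) (Cadd z w).
Proof. intros [] []; split; apply avg_lim_plus; auto. Qed.

Lemma avg_limC_Cmul_l a g z : avg_limC g z -> avg_limC (fun x => Cmul a (g x)) (Cmul a z).
Proof.
  intros [H1 H2]; split; cbn [Cmul fst snd].
  - apply (avg_lim_scal (- snd a)) in H2. apply (avg_lim_scal (fst a)) in H1.
    eapply avg_lim_ext; [|replace (fst a * fst z - snd a * snd z)
                           with (fst a * fst z + - snd a * snd z) by ring;
                         apply avg_lim_plus; eauto].
    intros; cbn beta; ring.
  - apply avg_lim_plus; apply avg_lim_scal; auto.
Qed.

Lemma avg_limC_Csum K (F : nat -> X -> Cplx) (z : nat -> Cplx) :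
  (forall m, (m < K)%nat -> avg_limC (F m) (z m)) ->
  avg_limC (fun x => Csum K (fun m => F m x)) (Csum K z).
Proof.
  induction K as [|K IH]; intros H; [apply (avg_limC_const C0)|].
  apply avg_limC_Cadd; [apply IH; intros; apply H|apply H]; lia.
Qed.

Lemma avg_limC_unique g z z' : avg_limC g z -> avg_limC g z' -> z = z'.
Proof. intros [] []; apply injective_projections; eapply avg_lim_unique; eauto. Qed.

Lemma avg_limC_odd (S : X -> X) g z :
  (forall x j, g (Nat.iter j T (S x)) = Copp (g (Nat.iter j T x))) ->
  avg_limC g z -> z = C0.
Proof.
  intros HS Hg.
  assert (Hneg : avg_limC (fun x => Copp (g x)) z).
  { eapply avg_limC_transfer; [|exact Hg]. intros x. exists (S x). intros j. rewrite HS. auto. }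
  assert (Hneg' : avg_limC (fun x => Copp (g x)) (Cmul (-1, 0) z)).
  { eapply avg_limC_ext; [|apply (avg_limC_Cmul_l (-1, 0)), Hg]. intros; cring. }
  assert (E := avg_limC_unique _ _ _ Hneg Hneg').
  destruct z as [z1 z2]. unfold Cmul in E; cbn [fst snd] in E. injection E. intros.
  unfold C0. f_equal; lra.
Qed.

End Uniform_averages.

Definition phase (beta : Z -> R) (k : Z) : R :=
  match k with
  | Z0 => 0
  | Zpos q => - rsum (Pos.to_nat q) (fun j => beta (Z.of_nat j))
  | Zneg q => rsum (Pos.to_nat q) (fun j => beta (- Z.of_nat (S j))%Z)
  end.

Lemma phase_pos beta n : phase beta (Z.of_nat n) = - rsum n (fun j => beta (Z.of_nat j)).
Proof. destruct n; [simpl; ring|]. simpl. rewrite SuccNat2Pos.id_succ. reflexivity. Qed.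

Lemma phase_neg beta n :
  phase beta (- Z.of_nat n)%Z = rsum n (fun j => beta (- Z.of_nat (S j))%Z).
Proof. destruct n; [reflexivity|]. simpl. rewrite SuccNat2Pos.id_succ. reflexivity. Qed.

Lemma phase_pred beta k : phase beta (k - 1)%Z = phase beta k + beta (k - 1)%Z.
Proof.
  destruct (Z_lt_le_dec 0 k).
  - replace k with (Z.of_nat (S (Z.to_nat (k - 1)))) by lia.
    replace (Z.of_nat (S (Z.to_nat (k - 1))) - 1)%Z with (Z.of_nat (Z.to_nat (k - 1))) by lia.
    rewrite !phase_pos, rsum_S. ring.
  - replace k with (- Z.of_nat (Z.to_nat (- k)))%Z by lia.
    replace (- Z.of_nat (Z.to_nat (- k)) - 1)%Z with (- Z.of_nat (S (Z.to_nat (- k))))%Z by lia.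
    rewrite !phase_neg, rsum_S. ring.
Qed.

Lemma phase_step_iff beta c D k :
  Csub (Cmul (D (k - 1)%Z) (e (phase beta (k - 1)))) (Cmul (D k) (e (phase beta k)))
    = Cmul (c k) (e (phase beta k)) <->
  Cmul (D (k - 1)%Z) (e (beta (k - 1)%Z)) = Cadd (c k) (D k).
Proof.
  rewrite phase_pred, e_add.
  set (w := e (phase beta k)). set (X := Cmul (D (k - 1)%Z) (e (beta (k - 1)%Z))).
  replace (Csub (Cmul (D (k - 1)%Z) (Cmul w (e (beta (k - 1)%Z)))) (Cmul (D k) w))
    with (Cmul (Csub X (D k)) w) by (unfold X; cring).
  split; intros H.
  - apply (Cmul_e_cancel _ _ (phase beta k)). fold w.
    replace (Cmul X w) with (Cadd (Cmul (Csub X (D k)) w) (Cmul (D k) w)) by cring.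
    rewrite H. cring.
  - rewrite H. cring.
Qed.

Definition obstruction (beta : Z -> R) (c : Z -> Cplx) (N : nat) : Cplx :=
  Cadd (Cadd
    (Csum N (fun k' => let k := S k' in
       Cmul (c (Z.of_nat k)) (e (- rsum k (fun j => beta (Z.of_nat j))))))
    (c 0%Z))
    (Csum (N - 1) (fun k' => let k := S k' in
       Cmul (c (- Z.of_nat k)%Z) (e (rsum k (fun j => beta (- Z.of_nat (S j))%Z))))).

Section Telescope.

Variables (beta : Z -> R) (c : Z -> Cplx) (E : Z -> Cplx) (N : nat).
Hypothesis HE : forall k, Csub (E (k - 1)%Z) (E k) = Cmul (c k) (e (phase beta k)).
Hypothesis Hc : forall k, (Z.of_nat N <= Z.abs k)%Z -> c k = C0.

Lemma telescope_pos n :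
  Csum n (fun k' => let k := S k' in
    Cmul (c (Z.of_nat k)) (e (- rsum k (fun j => beta (Z.of_nat j)))))
  = Csub (E 0%Z) (E (Z.of_nat n)).
Proof.
  induction n as [|n IH]; [cbn; cring|].
  rewrite Csum_S, IH. cbv beta zeta. rewrite <- phase_pos, <- HE.
  replace (Z.of_nat (S n) - 1)%Z with (Z.of_nat n) by lia. cring.
Qed.

Lemma telescope_neg n :
  Csum n (fun k' => let k := S k' in
    Cmul (c (- Z.of_nat k)%Z) (e (rsum k (fun j => beta (- Z.of_nat (S j))%Z))))
  = Csub (E (- Z.of_nat (S n))%Z) (E (-1)%Z).
Proof.
  induction n as [|n IH]; [cbn; cring|].
  rewrite Csum_S, IH. cbv beta zeta. rewrite <- phase_neg, <- HE.
  replace (- Z.of_nat (S n) - 1)%Z with (- Z.of_nat (S (S n)))%Z by lia. cring.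
Qed.

Lemma obstruction_telescope : obstruction beta c N = Csub (E (- Z.of_nat N)%Z) (E (Z.of_nat N)).
Proof.
  unfold obstruction. destruct N as [|N'].
  - rewrite Hc by (simpl; lia). cbn. cring.
  - rewrite telescope_pos, telescope_neg. replace (S (S N' - 1)) with (S N') by lia.
    assert (H0 := HE 0%Z). change (0 - 1)%Z with (-1)%Z in H0.
    cbn [phase] in H0. rewrite e_0 in H0.
    replace (c 0%Z) with (Csub (E (-1)%Z) (E 0%Z)) by (rewrite H0; cring). cring.
Qed.

Lemma E_const_above r : E (Z.of_nat N + Z.of_nat r)%Z = E (Z.of_nat N).
Proof.
  induction r as [|r IH]; [f_equal; lia|]. rewrite <- IH.
  assert (H := HE (Z.of_nat N + Z.of_nat (S r))%Z).
  replace (Z.of_nat N + Z.of_nat (S r) - 1)%Z with (Z.of_nat N + Z.of_nat r)%Z in H by lia.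
  rewrite Hc in H by lia.
  replace (E (Z.of_nat N + Z.of_nat r)%Z)
    with (Cadd (Csub (E (Z.of_nat N + Z.of_nat r)%Z) (E (Z.of_nat N + Z.of_nat (S r))%Z))
               (E (Z.of_nat N + Z.of_nat (S r))%Z)) by cring.
  rewrite H. cring.
Qed.

Lemma E_const_below r : E (- Z.of_nat N - Z.of_nat r)%Z = E (- Z.of_nat N)%Z.
Proof.
  induction r as [|r IH]; [f_equal; lia|]. rewrite <- IH.
  assert (H := HE (- Z.of_nat N - Z.of_nat r)%Z).
  replace (- Z.of_nat N - Z.of_nat r - 1)%Z with (- Z.of_nat N - Z.of_nat (S r))%Z in H by lia.
  rewrite Hc in H by lia.
  replace (E (- Z.of_nat N - Z.of_nat (S r))%Z)
    with (Cadd (Csub (E (- Z.of_nat N - Z.of_nat (S r))%Z) (E (- Z.of_nat N - Z.of_nat r)%Z))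
               (E (- Z.of_nat N - Z.of_nat r)%Z)) by cring.
  rewrite H. cring.
Qed.

End Telescope.

Section Unipotent_affine_map.

Variables (d : nat) (A : nat -> nat -> Z) (b : nat -> R).
Hypothesis Hdiag : forall l, (l < d)%nat -> A l l = 1%Z.
Hypothesis Hlow : forall l m, (l < d)%nat -> (m < l)%nat -> A l m = 0%Z.

Lemma rsum_upper_triangular n n' (x : nat -> R) m :
  (m < n)%nat -> (n <= n')%nat -> (n' <= d)%nat ->
  rsum n' (fun l => x l * IZR (A l m)) = rsum n (fun l => x l * IZR (A l m)).
Proof.
  intros Hm Hn Hn'. rewrite (rsum_split n n') by exact Hn.
  rewrite (rsum_ext (n' - n) _ (fun _ => 0)), rsum_const; [ring|].
  intros j Hj. rewrite Hlow by lia. ring.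
Qed.

Lemma Tmap_restrict n y m : (m < n)%nat -> (n <= d)%nat -> Tmap n A b y m = Tmap d A b y m.
Proof.
  intros Hm Hn. unfold Tmap.
  destruct (Nat.ltb_spec m n), (Nat.ltb_spec m d); try lia.
  rewrite (rsum_upper_triangular n d) by lia. reflexivity.
Qed.

Lemma dot_Tmap n n' l l' y :
  (forall m, (m < n)%nat -> l' m = zsum n (fun k => (A m k * l k)%Z)) ->
  (n <= n')%nat -> (n' <= d)%nat ->
  dot n l (Tmap n' A b y) = dot n l' y + dot n l b.
Proof.
  intros Hl' Hn Hn'. unfold dot at 1.
  rewrite (rsum_ext n _ (fun m => rsum n (fun k => IZR (l m) * (y k * IZR (A k m)))
                                  + IZR (l m) * b m)).
  - rewrite rsum_plus, rsum_swap. f_equal. apply rsum_ext. intros k Hk.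
    rewrite Hl', IZR_zsum by exact Hk. rewrite Rmult_comm, <- rsum_scal.
    apply rsum_ext. intros m _. rewrite mult_IZR. ring.
  - intros m Hm. unfold Tmap. destruct (Nat.ltb_spec m n'); [|lia].
    rewrite (rsum_upper_triangular n n') by lia. rewrite rsum_scal. ring.
Qed.

Definition agree_upto (p : nat) (z z' : nat -> R) : Prop := forall m, (m <= p)%nat -> z m = z' m.

Definition rot (p : nat) (t : R) (z : nat -> R) : nat -> R := upd z p (z p + t).

Lemma Tmap_agree_upto p z z' :
  agree_upto p z z' -> agree_upto p (Tmap d A b z) (Tmap d A b z').
Proof.
  intros H m Hm. unfold Tmap. destruct (Nat.ltb_spec m d); [|auto].
  f_equal. apply rsum_ext. intros l Hl.
  destruct (Nat.le_gt_cases l m); [rewrite H by lia; auto|]. rewrite Hlow by lia. ring.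
Qed.

(** Rotating [z p] by [t] moves [(T z) m] by [t * A p m], which is [0] for [m < p]
    and [t] for [m = p]. *)
Lemma Tmap_rot p t z : (p < d)%nat ->
  agree_upto p (Tmap d A b (rot p t z)) (rot p t (Tmap d A b z)).
Proof.
  intros Hp m Hm. unfold Tmap, rot.
  rewrite (rsum_ext d _ (fun l => if Nat.eqb l p then (z p + t) * IZR (A l m)
                                  else z l * IZR (A l m)))
    by (intros l _; unfold upd; destruct (Nat.eqb_spec l p); subst; auto).
  rewrite rsum_upd by exact Hp. unfold upd.
  destruct (Nat.ltb_spec m d); [|lia].
  destruct (Nat.eqb_spec m p) as [->|].
  - destruct (Nat.ltb_spec p d); [|lia]. rewrite Hdiag by exact Hp. ring.
  - rewrite Hlow by lia. ring.
Qed.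

Lemma iter_Tmap_rot p t z j : (p < d)%nat ->
  agree_upto p (Nat.iter j (Tmap d A b) (rot p t z)) (rot p t (Nat.iter j (Tmap d A b) z)).
Proof.
  intros Hp. induction j as [|j IH]; [intros m _; reflexivity|].
  intros m Hm. rewrite !Nat.iter_succ, (Tmap_agree_upto _ _ _ IH m Hm).
  apply Tmap_rot; auto.
Qed.

Lemma dot_agree_upto n p l z z' : (forall m, (p < m < n)%nat -> l m = 0%Z) ->
  agree_upto p z z' -> dot n l z = dot n l z'.
Proof.
  intros Hl H. apply dot_ext. intros m Hm.
  destruct (Nat.le_gt_cases m p); [rewrite H; auto|]. rewrite Hl by lia. ring.
Qed.

Lemma dot_rot n p l t z : (p < n)%nat -> dot n l (rot p t z) = dot n l z + IZR (l p) * t.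
Proof. intros Hp. unfold rot. rewrite dot_upd by exact Hp. f_equal. f_equal. ring. Qed.

Hypothesis Herg : uniquely_ergodic d A b.

Lemma avg_limC_exists g : torus_fun d g -> contC d g ->
  exists z, avg_limC (Tmap d A b) g z.
Proof.
  intros Hg [Hc1 Hc2].
  destruct (Herg _ (torus_map d g fst Hg) Hc1) as [z1 H1].
  destruct (Herg _ (torus_map d g snd Hg) Hc2) as [z2 H2].
  exists (z1, z2). split; assumption.
Qed.

(** Rotating coordinate [p] by [1 / (2 l_p)] negates [e (l . y)] and commutes with [T]
    as far as [l] can see, so the average of [e (l . y)] equals its own negative. *)
Lemma avg_limC_e_dot_zero n p l : (n <= d)%nat -> (p < n)%nat ->
  (forall m, (p < m < n)%nat -> l m = 0%Z) -> l p <> 0%Z ->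
  avg_limC (Tmap d A b) (fun y => e (dot n l y)) C0.
Proof.
  intros Hn Hp Hl Hlp.
  destruct (avg_limC_exists (fun y => e (dot n l y))) as [z Hz].
  - apply (torus_mono n); auto. apply torus_e_dot.
  - apply (contC_mono n); auto. apply contC_e_dot.
  - enough (z = C0) as <- by exact Hz.
    apply (avg_limC_odd (Tmap d A b) (fun _ => 0) (rot p (/ (2 * IZR (l p))))
                        (fun y => e (dot n l y))); auto.
    intros x j. rewrite (dot_agree_upto n p l _ _ Hl (iter_Tmap_rot p _ x j ltac:(lia))).
    rewrite dot_rot by exact Hp. rewrite <- e_plus_half. f_equal. field.
    apply not_0_IZR, Hlp.
Qed.

End Unipotent_affine_map.

Section Cohomological_equation.

Variables (d : nat) (A : nat -> nat -> Z) (b : nat -> R).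
Hypothesis Hdiag : forall l, (l < d)%nat -> A l l = 1%Z.
Hypothesis Hlow : forall l m, (l < d)%nat -> (m < l)%nat -> A l m = 0%Z.
Hypothesis Herg : uniquely_ergodic d A b.
Hypothesis Hsup : forall j, (S j < d)%nat -> A j (S j) <> 0%Z.

Variable p : nat.
(** The paper's [i] is [S (S p)], so [p] and [S p] index its last two coordinates. *)
Local Notation i := (S (S p)).
Hypothesis Hid : (i <= d)%nat.

Variable L : Z -> nat -> Z.
Hypothesis HL : forall (k : Z) (m : nat), (m < i)%nat ->
  L (k + 1)%Z m = zsum i (fun n => (A m n * L k n)%Z).
Hypothesis Hnz : exists k : Z, L k (S p) <> 0%Z.

Lemma L_last_step k : L (k + 1)%Z (S p) = L k (S p).
Proof.
  rewrite HL, !zsum_S by lia.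
  rewrite (zsum_zero p) by (intros; apply Z.mul_eq_0; left; apply Hlow; lia).
  rewrite Hdiag, (Hlow (S p) p) by lia. lia.
Qed.

Lemma L_penult_step k : L (k + 1)%Z p = (L k p + A p (S p) * L k (S p))%Z.
Proof.
  rewrite HL, !zsum_S by lia.
  rewrite (zsum_zero p) by (intros; apply Z.mul_eq_0; left; apply Hlow; lia).
  rewrite Hdiag by lia. lia.
Qed.

Lemma L_last_const k : L k (S p) = L 0%Z (S p).
Proof.
  induction k as [|k IH|k IH] using Z.peano_ind; auto.
  - unfold Z.succ. rewrite L_last_step. exact IH.
  - rewrite <- IH, <- (L_last_step (Z.pred k)). f_equal. lia.
Qed.

Lemma L_penult_linear k : L k p = (L 0%Z p + k * (A p (S p) * L 0%Z (S p)))%Z.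
Proof.
  induction k as [|k IH|k IH] using Z.peano_ind; [lia| |].
  - unfold Z.succ. rewrite L_penult_step, L_last_const, IH. lia.
  - assert (E := L_penult_step (Z.pred k)). replace (Z.pred k + 1)%Z with k in E by lia.
    rewrite L_last_const in E. lia.
Qed.

Lemma L_penult_inj j k : j <> k -> L j p <> L k p.
Proof.
  intros Hjk. rewrite (L_penult_linear j), (L_penult_linear k).
  assert (Ha : A p (S p) <> 0%Z) by (apply Hsup; lia).
  assert (Hl : L 0%Z (S p) <> 0%Z)
    by (destruct Hnz as [k0 Hk0]; rewrite L_last_const in Hk0; exact Hk0).
  intros E. assert (Hz : ((j - k) * (A p (S p) * L 0%Z (S p)) = 0)%Z) by lia.
  apply Z.mul_eq_0 in Hz as [Hz|Hz]; [lia|].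
  apply Z.mul_eq_0 in Hz. tauto.
Qed.

Local Notation T := (Tmap d A b).
Let beta (k : Z) : R := dot i (L k) b.

Lemma dot_L_Tmap n k y : (i <= n)%nat -> (n <= d)%nat ->
  dot i (L k) (Tmap n A b y) = dot i (L (k + 1)%Z) y + beta k.
Proof. intros. apply (dot_Tmap d A b Hlow); auto. Qed.

Lemma avg_limC_orbit_pair j k :
  avg_limC T (fun y => Cmul (e (dot i (L j) y)) (e (- dot i (L k) y)))
    (if Z.eqb j k then C1 else C0).
Proof.
  apply (avg_limC_ext _ (fun y => e (dot i (fun m => (L j m - L k m)%Z) y))).
  { intros y. rewrite <- dot_sub, <- e_add. reflexivity. }
  destruct (Z.eqb_spec j k) as [<-|Hjk].
  - eapply avg_limC_ext; [|apply avg_limC_const].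
    intros y. cbv beta. rewrite <- dot_sub, Rminus_diag, e_0. reflexivity.
  - apply (avg_limC_e_dot_zero d A b Hdiag Hlow Herg i p); auto.
    + intros m Hm. replace m with (S p) by lia. rewrite (L_last_const j), (L_last_const k). lia.
    + intros E. apply (L_penult_inj j k Hjk). lia.
Qed.

Variables (c : Z -> Cplx) (N : nat).
Hypothesis HN : forall k : Z, (Z.of_nat N <= Z.abs k)%Z -> c k = C0.

Definition Psi (y : nat -> R) : Cplx := Csum_window N (fun k => Cmul (c k) (e (dot i (L k) y))).

Lemma avg_limC_Psi_coeff K :
  avg_limC T (fun y => Cmul (Psi y) (e (- dot i (L K) y))) (c K).
Proof.
  rewrite <- (Csum_window_delta N c K HN).
  eapply avg_limC_ext; [|apply avg_limC_Csum; intros m _;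
                         apply avg_limC_Cmul_l, avg_limC_orbit_pair].
  intros y. unfold Psi, Csum_window. rewrite Cmul_Csum_r. apply Csum_ext. intros m _. cring.
Qed.

Section Necessity.

Variable u : (nat -> R) -> Cplx.
Hypothesis Hu_torus : torus_fun i u.
Hypothesis Hu_cont : contC i u.
Hypothesis Hu_cob : forall y, Psi y = Csub (u (Tmap i A b y)) (u y).

Lemma u_Tmap y : u (T y) = Cadd (Psi y) (u y).
Proof.
  rewrite Hu_cob. destruct Hu_torus as [Hdep _].
  rewrite (Hdep (T y) (Tmap i A b y)); [cring|].
  intros m Hm. symmetry. apply (Tmap_restrict d A b Hlow); auto.
Qed.

Lemma fourier_coeff_exists : exists D : Z -> Cplx,
  forall k, avg_limC T (fun y => Cmul (u y) (e (- dot i (L k) y))) (D k).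
Proof.
  apply (choice (fun k z => avg_limC T (fun y => Cmul (u y) (e (- dot i (L k) y))) z)).
  intros k.
  assert (E : forall y, Cmul (u y) (e (dot i (fun m => (- L k m)%Z) y))
                        = Cmul (u y) (e (- dot i (L k) y)))
    by (intros; rewrite dot_opp; reflexivity).
  apply avg_limC_exists; auto.
  - apply (torus_mono i); auto. apply (torus_ext i _ _ E).
    apply (torus_map2 i u _ Cmul Hu_torus), torus_e_dot.
  - apply (contC_mono i); auto. apply (contC_ext i _ _ E).
    apply contC_Cmul; auto. apply contC_e_dot.
Qed.

Section Fourier_coefficients.

Variable D : Z -> Cplx.
Hypothesis HD : forall k, avg_limC T (fun y => Cmul (u y) (e (- dot i (L k) y))) (D k).

(** Compare the averages of [(u o T) e(-L(k+1) . y)]: by invariance they are [D k e(beta k)],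
    and by the cohomological equation they are [c (k+1) + D (k+1)]. *)
Lemma fourier_coeff_step k : Cmul (D k) (e (beta k)) = Cadd (c (k + 1)%Z) (D (k + 1)%Z).
Proof.
  transitivity (Cmul (e (beta k)) (D k)); [cring|].
  apply (avg_limC_unique T (fun _ => 0)
           (fun y => Cmul (u (T y)) (e (- dot i (L (k + 1)%Z) y)))).
  - eapply avg_limC_ext; [|apply (avg_limC_Cmul_l _ (e (beta k))), avg_limC_comp_T, HD].
    intros y. cbv beta. rewrite dot_L_Tmap by lia.
    replace (- (dot i (L (k + 1)%Z) y + beta k)) with (- beta k + - dot i (L (k + 1)%Z) y)
      by ring.
    rewrite e_add. transitivity (Cmul (Cmul (e (beta k)) (e (- beta k)))
                                      (Cmul (u (T y)) (e (- dot i (L (k + 1)%Z) y))));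
      [cring|].
    rewrite Cmul_e_opp. cring.
  - eapply avg_limC_ext; [|apply avg_limC_Cadd; [apply avg_limC_Psi_coeff | apply HD]].
    intros y. cbv beta. rewrite u_Tmap. cring.
Qed.

Lemma bessel_inequality Q (phi : nat -> Z) M :
  avg_lim T (fun y => Cnorm2 (u y)) Q ->
  (forall r r', (r < M)%nat -> (r' < M)%nat -> phi r = phi r' -> r = r') ->
  rsum M (fun r => Cnorm2 (D (phi r))) <= Q.
Proof.
  intros HQ Hphi.
  set (S y := Csum M (fun r => Cmul (D (phi r)) (e (dot i (L (phi r)) y)))).
  set (X := Csum M (fun r => Cmul (Cconj (D (phi r))) (D (phi r)))).
  assert (HX : fst X = rsum M (fun r => Cnorm2 (D (phi r))))
    by (unfold X; rewrite fst_Csum; apply rsum_ext; intros; cring).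
  assert (Hcross : avg_limC T (fun y => Cmul (u y) (Cconj (S y))) X).
  { eapply avg_limC_ext; [|apply avg_limC_Csum; intros r _; apply avg_limC_Cmul_l, HD].
    intros y. symmetry. unfold S. rewrite Cconj_Csum, Cmul_Csum_l.
    apply Csum_ext. intros r _. rewrite e_opp. cring. }
  assert (Hself : avg_limC T (fun y => Cmul (S y) (Cconj (S y))) X).
  { unfold X. rewrite <- (Csum_Csum_delta_inj M phi
                            (fun r r' => Cmul (Cconj (D (phi r'))) (D (phi r))) Hphi).
    eapply avg_limC_ext; [|apply avg_limC_Csum; intros r _; apply avg_limC_Csum; intros r' _;
                           apply avg_limC_Cmul_l, avg_limC_orbit_pair].
    intros y. symmetry. unfold S. rewrite Cconj_Csum, Cmul_Csum_r.
    apply Csum_ext. intros r _. rewrite Cmul_Csum_l.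
    apply Csum_ext. intros r' _. rewrite e_opp. cring. }
  assert (Hdist : avg_lim T (fun y => Cnorm2 (Csub (u y) (S y))) (Q + -2 * fst X + fst X)).
  { destruct Hcross as [Hc _], Hself as [Hs _].
    eapply avg_lim_ext; [|apply avg_lim_plus; [apply avg_lim_plus; [exact HQ|] | exact Hs];
                          apply avg_lim_scal, Hc].
    intros y. cbv beta. cring. }
  apply (avg_lim_nonneg T (fun _ => 0)) in Hdist; [lra | intros; apply Cnorm2_nonneg].
Qed.

(** Bessel's inequality forbids infinitely many Fourier coefficients of the same size. *)
Lemma fourier_coeff_const_zero (phi : nat -> Z) w :
  (forall r r', phi r = phi r' -> r = r') ->
  (forall r, Cnorm2 (D (phi r)) = Cnorm2 w) -> w = C0.
Proof.
  intros Hphi Hw.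
  destruct Hu_cont as [Hc1 Hc2].
  destruct (Herg (fun y => Cnorm2 (u y))) as [Q HQ].
  - apply (torus_mono i); auto. apply torus_map, Hu_torus.
  - apply (cont_mono i); auto. apply cont_plus; apply cont_mult; auto.
  - apply Cnorm2_eq0, (nonneg_archimedean_zero _ Q); [apply Cnorm2_nonneg|].
    intros M. rewrite <- rsum_const, (rsum_ext M _ (fun r => Cnorm2 (D (phi r)))) by auto.
    apply bessel_inequality; auto.
Qed.

End Fourier_coefficients.

Lemma necessity : obstruction beta c N = C0.
Proof.
  destruct fourier_coeff_exists as [D HD].
  set (E k := Cmul (D k) (e (phase beta k))).
  assert (HE : forall k, Csub (E (k - 1)%Z) (E k) = Cmul (c k) (e (phase beta k))).
  { intros k. apply phase_step_iff.
    assert (H := fourier_coeff_step D HD (k - 1)).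
    replace (k - 1 + 1)%Z with k in H by lia. exact H. }
  assert (HED : forall k, Cnorm2 (D k) = Cnorm2 (E k))
    by (intros; unfold E; rewrite Cnorm2_Cmul, Cnorm2_e; ring).
  rewrite (obstruction_telescope beta c E N HE HN).
  rewrite (fourier_coeff_const_zero D HD (fun r => Z.of_nat N + Z.of_nat r)%Z
             (E (Z.of_nat N))),
          (fourier_coeff_const_zero D HD (fun r => - Z.of_nat N - Z.of_nat r)%Z
             (E (- Z.of_nat N)%Z));
    try (intros; lia).
  - cring.
  - intros r. rewrite HED, (E_const_below beta c E N HE HN). reflexivity.
  - intros r. rewrite HED, (E_const_above beta c E N HE HN). reflexivity.
Qed.

End Necessity.

Section Sufficiency.

Hypothesis Hobs : obstruction beta c N = C0.

Fixpoint partial_sum (n : nat) : Cplx :=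
  match n with
  | O => C0
  | S n' => let k := (Z.of_nat (S n') - Z.of_nat N)%Z in
            Csub (partial_sum n') (Cmul (c k) (e (phase beta k)))
  end.

Definition E_sol (k : Z) : Cplx := partial_sum (Z.to_nat (k + Z.of_nat N)).

Lemma E_sol_step k : Csub (E_sol (k - 1)%Z) (E_sol k) = Cmul (c k) (e (phase beta k)).
Proof.
  unfold E_sol. destruct (Z_lt_le_dec 0 (k + Z.of_nat N)).
  - replace (Z.to_nat (k + Z.of_nat N)) with (S (Z.to_nat (k - 1 + Z.of_nat N))) by lia.
    cbn [partial_sum].
    replace (Z.of_nat (S (Z.to_nat (k - 1 + Z.of_nat N))) - Z.of_nat N)%Z with k by lia.
    cring.
  - replace (Z.to_nat (k + Z.of_nat N)) with 0%nat by lia.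
    replace (Z.to_nat (k - 1 + Z.of_nat N)) with 0%nat by lia.
    rewrite HN by lia. cbn. cring.
Qed.

Lemma E_sol_low k : (k <= - Z.of_nat N)%Z -> E_sol k = C0.
Proof.
  intros Hk. unfold E_sol. replace (Z.to_nat (k + Z.of_nat N)) with 0%nat by lia. reflexivity.
Qed.

Lemma E_sol_high : E_sol (Z.of_nat N) = C0.
Proof.
  assert (H := obstruction_telescope beta c E_sol N E_sol_step HN).
  rewrite Hobs, E_sol_low in H by lia.
  destruct (E_sol (Z.of_nat N)) as [x y]. unfold Csub, C0 in H; cbn in H.
  injection H. intros. unfold C0. f_equal; lra.
Qed.

Definition D_sol (k : Z) : Cplx := Cmul (E_sol k) (e (- phase beta k)).

Lemma D_sol_step k : Cmul (D_sol (k - 1)%Z) (e (beta (k - 1)%Z)) = Cadd (c k) (D_sol k).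
Proof.
  apply phase_step_iff.
  assert (HDE : forall j, Cmul (D_sol j) (e (phase beta j)) = E_sol j).
  { intros j. unfold D_sol.
    transitivity (Cmul (E_sol j) (Cmul (e (phase beta j)) (e (- phase beta j)))); [cring|].
    rewrite Cmul_e_opp. cring. }
  rewrite !HDE. apply E_sol_step.
Qed.

Definition u_sol (y : nat -> R) : Cplx :=
  Csum_window N (fun k => Cmul (D_sol k) (e (dot i (L k) y))).

Lemma Psi_coboundary y : Psi y = Csub (u_sol (Tmap i A b y)) (u_sol y).
Proof.
  set (f k := Cmul (Cmul (D_sol k) (e (beta k))) (e (dot i (L (k + 1)%Z) y))).
  assert (Hc : forall k, Cmul (c k) (e (dot i (L k) y))
                         = Csub (f (k - 1)%Z) (Cmul (D_sol k) (e (dot i (L k) y)))).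
  { intros k. unfold f. replace (k - 1 + 1)%Z with k by lia.
    replace (c k) with (Csub (Cmul (D_sol (k - 1)%Z) (e (beta (k - 1)%Z))) (D_sol k))
      by (rewrite D_sol_step; cring).
    cring. }
  unfold Psi, u_sol. rewrite (Csum_window_ext N _ _ (fun k _ => Hc k)).
  unfold Csum_window at 1. rewrite <- Csub_Csum. f_equal.
  change (Csum_window N (fun k => f (k - 1)%Z) =
          Csum_window N (fun k => Cmul (D_sol k) (e (dot i (L k) (Tmap i A b y))))).
  rewrite Csum_window_shift.
  - apply Csum_window_ext. intros k _. unfold f.
    rewrite dot_L_Tmap, e_add by lia. cring.
  - unfold f, D_sol. rewrite E_sol_low by lia. cring.
  - unfold f, D_sol. rewrite E_sol_high. cring.
Qed.

Lemma sufficiency : smooth_coboundary i A b Psi.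
Proof.
  exists u_sol.
  destruct (trig_poly_smooth i (2 * N + 1) (fun n => L (Z.of_nat n - Z.of_nat N)%Z)
              (fun n => D_sol (Z.of_nat n - Z.of_nat N)%Z)) as [H1 H2].
  split; [apply torus_trig_poly | split; [exact H1 | split; [exact H2 | exact Psi_coboundary]]].
Qed.

End Sufficiency.
End Cohomological_equation.

Theorem lemma3p3
  (d : nat) (A : nat -> nat -> Z) (b : nat -> R)
  (Hd : (2 <= d)%nat)
  (Hdiag : forall l, (l < d)%nat -> A l l = 1%Z)
  (Hlow : forall l m, (l < d)%nat -> (m < l)%nat -> A l m = 0%Z)
  (Herg : uniquely_ergodic d A b)
  (Hsup : forall j, (S j < d)%nat -> A j (S j) <> 0%Z)
  (i : nat) (Hi2 : (2 <= i)%nat) (Hid : (i <= d)%nat)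
  (L : Z -> nat -> Z)
  (HL : forall (k : Z) (m : nat), (m < i)%nat ->
          L (k + 1)%Z m = zsum i (fun n => (A m n * L k n)%Z))
  (Hnz : exists k : Z, L k (i - 1)%nat <> 0%Z)
  (c : Z -> Cplx) (N : nat)
  (HN : forall n : Z, (Z.of_nat N <= Z.abs n)%Z -> c n = C0) :
  smooth_coboundary i A b
    (fun y => Csum (2 * N + 1)
       (fun n => let k := (Z.of_nat n - Z.of_nat N)%Z in
                 Cmul (c k) (e (dot i (L k) y))))
  <->
  Cadd (Cadd
    (Csum N (fun k' => let k := S k' in
       Cmul (c (Z.of_nat k))
            (e (- rsum k (fun j => dot i (L (Z.of_nat j)) b)))))
    (c 0%Z))
    (Csum (N - 1) (fun k' => let k := S k' in
       Cmul (c (- Z.of_nat k)%Z)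
            (e (rsum k (fun j => dot i (L (- Z.of_nat (S j))%Z) b)))))
  = C0.
Proof.
  destruct i as [|[|p]]; try lia.
  split.
  - intros (u & Hu_torus & Hu1 & Hu2 & Hu_cob).
    exact (necessity d A b Hdiag Hlow Herg Hsup p Hid L HL Hnz c N HN u
             Hu_torus (conj (Hu1 0%nat) (Hu2 0%nat)) Hu_cob).
  - exact (sufficiency d A b Hlow p Hid L HL c N HN).
Qed.
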